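(* The Dd-MDP corresponding to any online job scheduling (OJS) instance admits a deterministic chasing oracle whose chasing regret is at most $2\cdot CW$ (for any target pricing policy, any initial round and any initial bandwidth vector).
   Context: OJS problem: there are $N$ slots; slot $i\in[N]$ has bandwidth $c(i)$. $T$ jobs arrive in order $t=1,\dots,T$; job $t$ has arrival slot $a_t$, departure slot $d_t\ge a_t$, length $1\le l_t\le d_t-a_t+1$ and value $v_t\in[0,1)$, chosen by an adversary; jobs are reported at the beginning of their arrival slot in the order of their indices (so $a_1\le a_2\le\cdots\le a_T$). $C\ge\max_ic(i)$ and $W\ge\max_t(d_t-a_t+1)$. Let $A_t=[a_t,a_t+W-1]$ and $\mathcal I_t=\{[i,i+l_t-1]:a_t\le i\le d_t-l_t+1\}$. For job $t$ the mechanism posts $\bm p\in(0,1]^{A_t}$ (before seeing $d_t,l_t,v_t$); the job receives one bandwidth unit of each slot in $\hat A^{\bm p}_t=\emptyset$ if $v_t<\min_{I\in\mathcal I_t}\sum_{i\in I}\bm p(i)$, and otherwise $\hat A^{\bm p}_t=\arg\min_{I\in\mathcal I_t}\sum_{i\in I}\bm p(i)$ (lexicographic ties), paying $\hat q^{\bm p}_t=\sum_{i\in\hat A^{\bm p}_t}\bm p(i)$. The bandwidth vector $\bm\lambda_t\in\{0,\dots,C\}^{A_t}$ records remaining bandwidth: $\bm\lambda_t(i)=c(i)$ if slot $i$ was not allocated to jobs $1,\dots,t-1$, and $\bm\lambda_{t+1}(i)=\bm\lambda_t(i)-1$ if slot $i$ is allocated to job $t$ and $i\in A_{t+1}$. $\bm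 p$ is feasible for $\bm\lambda$ if $\bm p(i)=1$ whenever $\bm\lambda(i)=0$. A pricing policy maps bandwidth vectors to feasible price vectors. Corresponding Dd-MDP: states are bandwidth vectors; actions at a state are feasible price vectors; reward $f_t(s,x)=\hat q^x_t$; transition $g_t(s,x)=s'$ where $s'(i)=s(i)-\mathbb{1}[i\in\hat A^x_t]$ for $i\in A_t\cap A_{t+1}$ and $s'(i)=c(i)$ for $i\in A_{t+1}\setminus A_t$. A policy $\gamma$ is simulated from the true start: $s^\gamma_1=s_1$, $x^\gamma_t=\gamma(s^\gamma_t)$, $s^\gamma_{t+1}=g_t(s^\gamma_t,x^\gamma_t)$. Chasing oracle: given target policy $\gamma$, invoked at round $t_{\mathrm{init}}$ with an arbitrary initial state $s_{\mathrm{init}}$, it outputs in each round $t\ge t_{\mathrm{init}}$ an action $\hat x(t)$ feasible for $\hat s(t)$, where $\hat s(t_{\mathrm{init}})=s_{\mathrm{init}}$, $\hat s(t)=g_{t-1}(\hat s(t-1),\hat x(t-1))$, observing $g_t,f_t$ after each round; its chasing regret up to any halting round $t_{\mathrm{final}}\ge t_{\mathrm{init}}$ is $\sum_{t=t_{\mathrm{init}}}^{t_{\mathrm{final}}}f_t(s^\gamma_t,x^\gamma_t)-\sum_{t=t_{\mathrm{init}}}^{t_{\mathrm{final}}}\mathbb{E}[f_t(\hat s(t),\hat x(t))]$. *)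

From HB Require Import structures.
From mathcomp Require Import all_boot all_order all_algebra.
Set Implicit Arguments. Unset Strict Implicit. Unset Printing Implicit Defensive.
Import Order.TTheory GRing.Theory Num.Theory.
Local Open Scope ring_scope.

Section OJS.
Variable R : realFieldType.
Variable W : nat.

(* A bandwidth vector / price vector on the window A_t = [a_t, a_t+W-1] is
   represented relatively: index k : 'I_W stands for slot a_t + k. *)
Definition state := {ffun 'I_W -> nat}.
Definition action := {ffun 'I_W -> R}.

Definition icost (p : action) (l k : nat) : R :=
  \sum_(j < W | (k <= j < k + l)%N) p j.

(* number of admissible starting offsets: starts a_t + k with
   0 <= k <= d_t - l_t + 1 - a_t *)
Definition nstarts (a d l : nat) : nat := (d.+1 - a - l).+1.

Definition mincost (p : action) (a d l : nat) : R :=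
  \big[Order.min/icost p l 0]_(k < nstarts a d l) icost p l k.

(* lexicographically first minimizer (intervals of equal length are ordered
   lexicographically by their start) *)
Definition beststart (p : action) (a d l : nat) : nat :=
  find (fun k => icost p l k == mincost p a d l) (iota 0 (nstarts a d l)).

Definition allocated (p : action) (a d l : nat) (v : R) (j : 'I_W) : bool :=
  ~~ (v < mincost p a d l) &&
  (beststart p a d l <= j < beststart p a d l + l)%N.

Definition payment (p : action) (a d l : nat) (v : R) : R :=
  \sum_(j < W | allocated p a d l v j) p j.

Definition next_state (c : nat -> nat) (a a' : nat) (s : state)
    (al : 'I_W -> bool) : state :=
  [ffun k : 'I_W =>
     let i := (a' + k)%N in
     if (a <= i < a + W)%N then
       let j := insubd k (i - a)%N in (s j - (if al j then 1 else 0))%N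
     else c i].

Definition feasible (s : state) (x : action) : Prop :=
  forall k, 0 < x k <= 1 /\ (s k = 0%N -> x k = 1).

Definition is_state (C : nat) (s : state) : Prop := forall k, (s k <= C)%N.

(* a pricing policy: (window start, bandwidth vector) -> price vector *)
Definition policy := nat -> state -> action.

Definition pricing_policy (C : nat) (gam : policy) : Prop :=
  forall a s, is_state C s -> feasible s (gam a s).

Definition rew (a d l : nat -> nat) (v : nat -> R) (t : nat) :
    state -> action -> R :=
  fun _ x => payment x (a t) (d t) (l t) (v t).

Definition trans (c : nat -> nat) (a d l : nat -> nat) (v : nat -> R)
    (t : nat) : state -> action -> state :=
  fun s x => next_state c (a t) (a t.+1) s (allocated x (a t) (d t) (l t) (v t)).

Definition start_state (c : nat -> nat) (a : nat -> nat) : state :=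
  [ffun k : 'I_W => c (a 1%N + k)%N].

(* trajectory of a policy simulated from the true start:
   pol_state n = s^gam_{n+1} *)
Fixpoint pol_state (c : nat -> nat) (a d l : nat -> nat) (v : nat -> R)
    (gam : policy) (n : nat) : state :=
  match n with
  | 0 => start_state c a
  | n'.+1 =>
      let s := pol_state c a d l v gam n' in
      trans c a d l v n'.+1 s (gam (a n'.+1) s)
  end.

Definition pol_rew c a d l v (gam : policy) (t : nat) : R :=
  let s := pol_state c a d l v gam t.-1 in rew a d l v t s (gam (a t) s).

(* What a chasing oracle has observed before round t: for each earlier round u,
   the window start a_u and the functions f_u, g_u. *)
Definition history :=
  seq (nat * (state -> action -> R) * (state -> action -> state)).

Definition hist c (a d l : nat -> nat) (v : nat -> R) (t : nat) : history :=
  [seq (a u, rew a d l v u, trans c a d l v u) | u <- iota 1 t.-1].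

(* A deterministic chasing oracle: given the target policy, the initial round
   t_init, the initial state s_init, the observed history and the current
   window start a_t, it outputs the price vector of round t. *)
Definition oracle := policy -> nat -> state -> history -> nat -> action.

(* oracle action and state at round ti + n *)
Fixpoint orc_state (O : oracle) c a d l v (gam : policy) (ti : nat)
    (si : state) (n : nat) : state :=
  match n with
  | 0 => si
  | n'.+1 =>
      let t := (ti + n')%N in
      let s := orc_state O c a d l v gam ti si n' in
      trans c a d l v t s (O gam ti si (hist c a d l v t) (a t))
  end.

Definition orc_act (O : oracle) c a d l v (gam : policy) (ti : nat)
    (si : state) (n : nat) : action :=
  O gam ti si (hist c a d l v (ti + n)%N) (a (ti + n)%N).

Definition orc_rew (O : oracle) c a d l v gam ti si (t : nat) : R :=
  rew a d l v t (orc_state O c a d l v gam ti si (t - ti))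
                (orc_act O c a d l v gam ti si (t - ti)).

(* chasing regret over rounds ti..tf (deterministic oracle: no expectation) *)
Definition chasing_regret (O : oracle) c a d l v gam ti si (tf : nat) : R :=
  \sum_(ti <= t < tf.+1) pol_rew c a d l v gam t
  - \sum_(ti <= t < tf.+1) orc_rew O c a d l v gam ti si t.

Definition valid_jobs (N W T : nat) (a d l : nat -> nat) (v : nat -> R) : Prop :=
  (forall t, (1 <= t <= T)%N ->
     [/\ (1 <= a t)%N, (a t <= d t <= N)%N,
         (1 <= l t <= (d t).+1 - a t)%N, ((d t).+1 - a t <= W)%N
       & 0 <= v t < 1])
  /\ (forall t, (1 <= t < T)%N -> (a t <= a t.+1)%N).

End OJS.

(* The oracle replays the history to know both the target's bandwidth vector
   s^gam_t and its own one.  While its own vector dominates s^gam_t pointwise it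
   posts the target's prices gam(s^gam_t), which are then feasible for it and
   earn exactly the target's reward, the payment depending on the prices only;
   otherwise it posts the all-ones prices, which sell nothing since every value
   is below 1.  Both moves preserve the domination on a slot unless the target
   sold there and the oracle did not, so a slot where the oracle is short was
   already short at t_init and lies in A_{t_init}: regret only accrues in rounds
   with a_t < a_{t_init} + W, and there it is at most the number of units the
   target sells.  These are paid for by the potential Phi_t = sum_i s^gam_t(i):
   units_sold_t + Phi_{t+1} <= Phi_t + C (a_{t+1} - a_t), and telescoping bounds
   the regret by Phi_{t_init} + C W <= 2 C W. *)
From Pilot Require Import Defs.
From mathcomp Require Import all_boot all_order all_algebra.
From mathcomp Require Import zify.
Import Order.TTheory GRing.Theory Num.Theory.
Set Implicit Arguments. Unset Strict Implicit. Unset Printing Implicit Defensive.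
Local Open Scope ring_scope.

Section Allocation.
Variables (R : realFieldType) (W : nat).
Implicit Types (p : action R W) (s : state W).

Lemma mincost_attained p a d l :
  has (fun k => icost p l k == mincost p a d l) (iota 0 (nstarts a d l)).
Proof.
pose attained y := has (fun k => icost p l k == y) (iota 0 (nstarts a d l)).
apply: (big_ind attained) => [|x y x_att y_att|k _].
- by apply/hasP; exists 0%N; rewrite ?mem_iota ?eqxx.
- by rewrite /Order.min; case: (x < y)%O.
- by apply/hasP; exists (val k); rewrite ?mem_iota ?eqxx /=.
Qed.

Lemma icost_beststart p a d l : icost p l (beststart p a d l) = mincost p a d l.
Proof.
have attained := mincost_attained p a d l.
have := nth_find 0%N attained.
rewrite /beststart nth_iota ?add0n; first by move/eqP.
by move: attained; rewrite has_find size_iota.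
Qed.

Lemma price_le_icost p l k (j : 'I_W) :
  (forall i, 0 <= p i) -> (k <= j < k + l)%N -> p j <= icost p l k.
Proof.
by move=> p_ge0 jkl; rewrite /icost (bigD1 j) //= lerDl sumr_ge0.
Qed.

(* A sold slot costs at most the minimal interval price, which is at most v < 1;
   a feasible price vector charges 1 for every exhausted slot. *)
Lemma allocated_avail s p a d l v j :
  feasible s p -> v < 1 -> allocated p a d l v j -> (0 < s j)%N.
Proof.
move=> feas_p v_lt1 /andP[v_ge j_in].
rewrite lt0n; apply/negP => /eqP sj0.
have p_ge0 i : 0 <= p i by have [/andP[/ltW]] := feas_p i.
have := price_le_icost p_ge0 j_in.
rewrite icost_beststart (proj2 (feas_p j) sj0) => min_ge1.
by move: v_ge; rewrite -leNgt => /(le_trans min_ge1)/(lt_le_trans v_lt1); rewrite ltxx.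
Qed.

Definition unit_prices : action R W := [ffun => 1].

Lemma unit_prices_feasible s : feasible s unit_prices.
Proof. by move=> k; rewrite ffunE ltr01 lexx. Qed.

Lemma unit_prices_unallocated a d l v j :
  (1 <= l <= d.+1 - a)%N -> (d.+1 - a <= W)%N -> v < 1 ->
  allocated unit_prices a d l v j = false.
Proof.
move=> l_range window v_lt1; rewrite /allocated.
suff min_ge1 : 1 <= mincost unit_prices a d l by rewrite (lt_le_trans v_lt1).
have icost_ge1 k : (k + l <= W)%N -> 1 <= icost unit_prices l k.
  move=> klW; have kW : (k < W)%N by lia.
  have := @price_le_icost unit_prices l k (Ordinal kW).
  by rewrite ffunE; apply; [move=> i; rewrite ffunE|rewrite /=; lia].
apply: (big_ind (fun y => 1 <= y)) => [|x y x_ge y_ge|k _].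
- by apply: icost_ge1; lia.
- by rewrite le_min x_ge y_ge.
- by apply: icost_ge1; have := ltn_ord k; rewrite /nstarts; lia.
Qed.

Definition sold p a d l v : nat := \sum_(j < W) allocated p a d l v j.

Lemma payment_le_sold s p a d l v :
  feasible s p -> payment p a d l v <= (sold p a d l v)%:R.
Proof.
move=> feas_p; rewrite /payment /sold natr_sum big_mkcond /=.
apply: ler_sum => j _; case: ifP => //= _.
by have [/andP[]] := feas_p j.
Qed.

End Allocation.

Section Bandwidth.
Variable W : nat.

Definition extn (f : 'I_W -> nat) (j : nat) : nat :=
  if insub j is Some k then f k else 0%N.

Lemma sum_extn f : \sum_(k < W) f k = \sum_(0 <= j < W) extn f j.
Proof. by rewrite big_mkord; apply: eq_bigr => k _; rewrite /extn valK. Qed.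

Lemma extn_ord f (k : 'I_W) : extn f k = f k.
Proof. by rewrite /extn valK. Qed.

Lemma extn_insubd f (k0 : 'I_W) j : (j < W)%N -> f (insubd k0 j) = extn f j.
Proof. by move=> jW; rewrite /extn /insubd; case: insubP => // /negP. Qed.

(* Slots kept from the old window lose exactly the units sold; the at most
   a' - a fresh slots bring at most C units each. *)
Lemma next_state_total (c : nat -> nat) C a a' (s : state W) (b : 'I_W -> bool) :
  (forall i, (c i <= C)%N) -> (a <= a')%N -> (forall j, b j -> (0 < s j)%N) ->
  (\sum_(j < W) b j + \sum_(j < W) next_state c a a' s b j
     <= \sum_(j < W) s j + C * (a' - a))%N.
Proof.
move=> c_le aa' b_avail.
set dl := (a' - a)%N; set e := extn (fun k => s k - b k)%N.
have next_le j : (j < W)%N ->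
    (extn (next_state c a a' s b) j <= if (j + dl < W)%N then e (j + dl) else C)%N.
  move=> jW; rewrite (extn_ord _ (Ordinal jW)) ffunE /=.
  have -> : (a <= a' + j < a + W)%N = (j + dl < W)%N by lia.
  case: ifP => // jdl; rewrite (_ : (a' + j - a)%N = (j + dl)%N); last lia.
  by rewrite /e -(extn_insubd _ (Ordinal jW)) //; case: (b _).
have kept : (\sum_(j < W) b j + \sum_(0 <= j < W) e j = \sum_(j < W) s j)%N.
  rewrite -sum_extn -big_split /=; apply: eq_bigr => j _.
  by have := b_avail j; case: (b j) => /= [/(_ isT)|_]; lia.
have inherited_le :
    (\sum_(0 <= j < W - dl) extn (next_state c a a' s b) j <= \sum_(0 <= j < W) e j)%N.
  apply: (@leq_trans (\sum_(0 <= j < W - dl) e (j + dl))).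
    rewrite big_nat_cond [X in (_ <= X)%N]big_nat_cond.
    by apply: leq_sum => j /andP[/andP[_ j_lt] _]; have := next_le j; rewrite ifT; lia.
  rewrite -(big_addn 0 W dl xpredT) add0n.
  case: (leqP dl W) => [dlW|Wdl]; last by rewrite big_geq ?(ltnW Wdl).
  by rewrite [X in (_ <= X)%N](@big_cat_nat _ _ _ dl) ?leq_addl.
have fresh_le : (\sum_(W - dl <= j < W) extn (next_state c a a' s b) j <= C * dl)%N.
  apply: (@leq_trans (\sum_(W - dl <= j < W) C)).
    rewrite big_nat_cond [X in (_ <= X)%N]big_nat_cond.
    by apply: leq_sum => j /andP[/andP[j_ge j_lt] _]; have := next_le j j_lt; rewrite ifF //; lia.
  by rewrite sum_nat_const_nat mulnC leq_mul2l; apply/orP; right; lia.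
rewrite -kept -addnA leq_add2l sum_extn (@big_cat_nat _ _ _ (W - dl)) ?leq_subr //=.
exact: leq_add inherited_le fresh_le.
Qed.

Lemma telescope_leq (x P A : nat -> nat) C i m :
  (forall t, (i <= t < m)%N ->
     (A t <= A t.+1)%N /\ (x t + P t.+1 <= P t + C * (A t.+1 - A t))%N) ->
  (i <= m)%N ->
  (A i <= A m)%N /\ (\sum_(i <= t < m) x t + P m <= P i + C * (A m - A i))%N.
Proof.
move=> step; elim: m step => [|m IH] step im.
  by move: im; rewrite leqn0 => /eqP->; rewrite big_geq //; lia.
case: (ltnP m i) => [mi|im'].
  have -> : i = m.+1 by lia.
  by rewrite big_geq //; lia.
have [mono_m sum_m] := IH (fun t ti => step t ltac:(lia)) im'.
have [mono_step bound_step] := step m ltac:(lia).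
split; first lia.
rewrite big_nat_recr //=.
have -> : (C * (A m.+1 - A i) = C * (A m - A i) + C * (A m.+1 - A m))%N.
  by rewrite -mulnDr; congr (_ * _)%N; lia.
lia.
Qed.

End Bandwidth.

Section ChasingOracle.
Variables (R : realFieldType) (W : nat).

Definition chase_prices (gam : policy R W) (at0 : nat) (sg sh : state W) : action R W :=
  if [forall k, sg k <= sh k]%N then gam at0 sg else unit_prices R W.

Definition replay_step (gam : policy R W) (ti : nat) (acc : nat * state W * state W)
    (e : nat * (state W -> action R W -> R) * (state W -> action R W -> state W)) :=
  let: (u, sg, sh) := acc in
  let: (au, _, g) := e in
  (u.+1, g sg (gam au sg), if (ti <= u)%N then g sh (chase_prices gam au sg sh) else sh).

Definition replay (gam : policy R W) ti (s1 si : state W) (h : history R W) :=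
  foldl (replay_step gam ti) (1%N, s1, si) h.

Definition first_window (h : history R W) (at0 : nat) : nat :=
  head at0 [seq e.1.1 | e <- h].

(* The oracle recomputes s^gam_t and its own state by replaying the observed
   transitions; a_1, needed for s^gam_1, is the window of the first entry of the
   history, or the current window when the history is still empty. *)
Definition chasing_oracle (c : nat -> nat) : oracle R W :=
  fun gam ti si h at0 =>
    let: (_, sg, sh) := replay gam ti (start_state W c (fun _ => first_window h at0)) si h in
    chase_prices gam at0 sg sh.

End ChasingOracle.

Section Regret.
Variables (R : realFieldType) (N C W T : nat) (c : nat -> nat).
Hypothesis c_le : forall i, (c i <= C)%N.
Variables (a d l : nat -> nat) (v : nat -> R).
Hypothesis jobs_valid : valid_jobs N W T a d l v.
Variable gam : policy R W.
Hypothesis gam_pricing : pricing_policy C gam.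
Variables (ti : nat) (si : state W).
Hypothesis ti_range : (1 <= ti <= T)%N.

Local Notation O := (@chasing_oracle R W c).
Local Notation sgam t := (pol_state c a d l v gam t.-1).
Local Notation shat n := (orc_state O c a d l v gam ti si n).
Local Notation hist t := (hist W c a d l v t).

Lemma pol_state_succ t : (1 <= t)%N ->
  sgam t.+1 = trans c a d l v t (sgam t) (gam (a t) (sgam t)).
Proof. by case: t. Qed.

Lemma hist_rcons t : (1 <= t)%N ->
  hist t.+1 = rcons (hist t) (a t, rew a d l v t, trans c a d l v t).
Proof.
case: t => // t _.
by rewrite /Defs.hist !succnK -map_rcons -cats1 -(addn1 t) iotaD add1n addn1.
Qed.

Lemma first_window_hist t : (1 <= t)%N -> first_window (hist t) (a t) = a 1%N.
Proof. by case: t => [|[|t]]. Qed.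

Lemma oracle_replay t : (1 <= t)%N ->
  O gam ti si (hist t) (a t) =
  let: (_, sg, sh) := replay gam ti (start_state W c a) si (hist t) in
  chase_prices gam (a t) sg sh.
Proof. by move=> t_ge1; rewrite /chasing_oracle first_window_hist. Qed.

Lemma orc_state_succ n :
  shat n.+1 = trans c a d l v (ti + n) (shat n) (orc_act O c a d l v gam ti si n).
Proof. by []. Qed.

Lemma replay_hist t : (1 <= t)%N ->
  replay gam ti (start_state W c a) si (hist t) = (t, sgam t, shat (t - ti)).
Proof.
elim: t => // t IH t_ge1.
case: t IH t_ge1 => [_ _|t IH _].
  by rewrite /replay /= (_ : (1 - ti = 0)%N) //; lia.
rewrite hist_rcons // /replay foldl_rcons -/(replay _ _ _ _ _) IH //=.
congr (_, _, _); case: ifP => t_ge; last by rewrite (_ : (t.+2 - ti = t.+1 - ti)%N) //; lia.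
rewrite (_ : (t.+2 - ti = (t.+1 - ti).+1)%N) ?orc_state_succ; last lia.
by rewrite /orc_act (_ : (ti + (t.+1 - ti) = t.+1)%N) ?oracle_replay ?IH //; lia.
Qed.

Lemma orc_act_chase n :
  orc_act O c a d l v gam ti si n = chase_prices gam (a (ti + n)) (sgam (ti + n)) (shat n).
Proof. by rewrite /orc_act oracle_replay ?replay_hist ?addKn //; lia. Qed.

Lemma pol_state_bounded n : is_state C (pol_state c a d l v gam n).
Proof.
elim: n => [|n IH] k /=; first by rewrite ffunE.
rewrite /trans /next_state ffunE /=; case: ifP => _ //.
exact: leq_trans (leq_subr _ _) (IH _).
Qed.

Lemma target_feasible t : feasible (sgam t) (gam (a t) (sgam t)).
Proof. exact: gam_pricing (pol_state_bounded _). Qed.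

Lemma job_valid t : (1 <= t <= T)%N ->
  [/\ (1 <= l t <= (d t).+1 - a t)%N, ((d t).+1 - a t <= W)%N & v t < 1].
Proof. by case: jobs_valid => valid _ /valid[_ _ l_range window /andP[_ v_lt1]]. Qed.

Lemma window_step t : (1 <= t < T)%N -> (a t <= a t.+1)%N.
Proof. by case: jobs_valid => _; apply. Qed.

(* While the oracle holds at least the target's bandwidth everywhere it sells
   the same units, and otherwise it sells nothing; so a slot where it holds less
   than the target was already short at t_init. *)
Lemma orc_deficit_in_window n k : (ti + n <= T)%N ->
  (shat n k < sgam (ti + n) k)%N -> (a (ti + n) + k < a ti + W)%N.
Proof.
elim: n k => [|n IH] k range; first by rewrite addn0 ltn_add2l ltn_ord.
rewrite orc_state_succ orc_act_chase addnS pol_state_succ; last lia.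
rewrite /trans /next_state !ffunE /=.
case: ifP => [in_prev|_]; last by rewrite ltnn.
set j := insubd k _.
have j_val : nat_of_ord j = (a (ti + n).+1 + k - a (ti + n))%N.
  by rewrite val_insubd ifT //; lia.
move=> deficit_next.
have deficit : (shat n j < sgam (ti + n) j)%N.
  move: deficit_next; rewrite /chase_prices; case: [forall _, _].
    by case: (allocated _ _ _ _ _ j) => /=; lia.
  have [l_range window v_lt1] := job_valid (t := ti + n) ltac:(lia).
  by rewrite unit_prices_unallocated //; case: (allocated _ _ _ _ _ j) => /=; lia.
by have := IH j ltac:(lia) deficit; lia.
Qed.

Definition units_sold t := sold (gam (a t) (sgam t)) (a t) (d t) (l t) (v t).

Definition potential t := (\sum_(j < W) sgam t j)%N.

Lemma regret_round_le t : (ti <= t <= T)%N ->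
  pol_rew c a d l v gam t - orc_rew O c a d l v gam ti si t
    <= ((a t < a ti + W) * units_sold t)%N%:R.
Proof.
move=> /andP[ti_t t_T].
rewrite /pol_rew /orc_rew /rew orc_act_chase subnKC // /chase_prices.
case: ifP => synced; first by rewrite subrr ler0n.
have [l_range window v_lt1] := job_valid (t := t) ltac:(lia).
have -> : payment (unit_prices R W) (a t) (d t) (l t) (v t) = 0.
  by rewrite /payment big_pred0 // => j; rewrite unit_prices_unallocated.
move/negbT/forallPn: synced => [k]; rewrite -ltnNge => deficit.
have := @orc_deficit_in_window (t - ti) k; rewrite subnKC // => /(_ t_T deficit) in_window.
rewrite (_ : (a t < a ti + W)%N) ?mul1n ?subr0; last lia.
exact: payment_le_sold (target_feasible t).
Qed.

Lemma units_sold_le_potential t : (1 <= t <= T)%N -> (units_sold t <= potential t)%N.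
Proof.
move=> t_range; have [_ _ v_lt1] := job_valid t_range.
apply: leq_sum => j _; case sold_j: (allocated _ _ _ _ _ j) => //=.
exact: allocated_avail (target_feasible t) v_lt1 sold_j.
Qed.

Lemma potential_step t : (1 <= t < T)%N ->
  (units_sold t + potential t.+1 <= potential t + C * (a t.+1 - a t))%N.
Proof.
move=> t_range; have [_ _ v_lt1] := job_valid (t := t) ltac:(lia).
rewrite /potential pol_state_succ; last lia.
apply: next_state_total => //; first exact: window_step.
by move=> j; apply: allocated_avail (target_feasible t) v_lt1.
Qed.

Lemma potential_le t : (potential t <= C * W)%N.
Proof.
rewrite mulnC -[W]card_ord -sum_nat_const.
by apply: leq_sum => j _; apply: pol_state_bounded.
Qed.

Lemma weighted_units_sold_le tf : (ti <= tf <= T)%N ->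
  (\sum_(ti <= t < tf.+1) (a t < a ti + W) * units_sold t <= 2 * C * W)%N.
Proof.
elim: tf => [|tf IH] /andP[ti_tf tf_T]; first lia.
rewrite big_nat_recr /=; last lia.
case: (boolP (a tf.+1 < a ti + W)%N) => in_window; last first.
  rewrite mul0n addn0; case: (leqP ti tf) => [ti_tf'|tf_ti]; first by apply: IH; lia.
  by rewrite big_geq.
have [_ telescoped] := @telescope_leq units_sold potential a C ti tf.+1
  (fun t t_range => conj (window_step (t := t) ltac:(lia)) (potential_step (t := t) ltac:(lia))) ti_tf.
have weights_le : (\sum_(ti <= t < tf.+1) (a t < a ti + W) * units_sold t
                   <= \sum_(ti <= t < tf.+1) units_sold t)%N.
  by apply: leq_sum => t _; case: (_ < _)%N; rewrite ?mul1n ?mul0n.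
have := units_sold_le_potential (t := tf.+1) ltac:(lia).
have := potential_le ti.
have : (C * (a tf.+1 - a ti) <= C * W)%N by rewrite leq_mul2l; apply/orP; right; lia.
rewrite mul1n -mulnA mul2n -addnn; lia.
Qed.

Lemma chasing_regret_le tf : (ti <= tf <= T)%N ->
  chasing_regret O c a d l v gam ti si tf <= (2 * C * W)%:R.
Proof.
move=> tf_range; rewrite /chasing_regret -sumrB.
apply: le_trans (_ : \sum_(ti <= t < tf.+1) ((a t < a ti + W) * units_sold t)%N%:R <= _).
  by rewrite big_nat_cond [X in _ <= X]big_nat_cond; apply: ler_sum => t /andP[t_range _];
     apply: regret_round_le; lia.
by rewrite -natr_sum ler_nat weighted_units_sold_le.
Qed.

Lemma orc_act_feasible n : feasible (shat n) (orc_act O c a d l v gam ti si n).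
Proof.
rewrite orc_act_chase /chase_prices; case: ifP => [synced|_]; last exact: unit_prices_feasible.
move=> k; have [p_range exhausted] := target_feasible (ti + n) k; split => // shat_k0.
by apply: exhausted; move/forallP: synced => /(_ k); rewrite shat_k0 leqn0 => /eqP.
Qed.

End Regret.

Theorem lemma1 (R : realFieldType) (N C W T : nat) (c : nat -> nat) :
  (forall i, (c i <= C)%N) ->
  exists O : oracle R W,
  forall (a d l : nat -> nat) (v : nat -> R),
    valid_jobs N W T a d l v ->
    forall gam : policy R W, pricing_policy C gam ->
    forall (ti : nat) (si : state W),
      (1 <= ti <= T)%N -> is_state C si ->
      (forall n, (ti + n <= T)%N ->
         feasible (orc_state O c a d l v gam ti si n)
                  (orc_act O c a d l v gam ti si n)) /\
      (forall tf, (ti <= tf <= T)%N ->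
         chasing_regret O c a d l v gam ti si tf <= (2 * C * W)%:R).
Proof.
move=> c_le; exists (@chasing_oracle R W c).
(* No bound on s_init is needed: the oracle only follows the target where it
   holds at least the target's bandwidth. *)
move=> a d l v jobs_valid gam gam_pricing ti si ti_range _; split=> [n _|tf].
- exact: orc_act_feasible c_le a d l v gam gam_pricing ti si ti_range n.
- move=> tf_range.
  exact: (chasing_regret_le c_le jobs_valid gam_pricing si ti_range tf_range).
Qed.
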